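(* Let $n\ge2$, $A\in\mathbb{R}^{n\times m}$, $B\in\mathbb{R}^{m\times n}$. If the DSR graph $G_{A,B}$ is steady, then the DSR$^{[2]}$ graph $G^{[2]}_{A,B}$ is steady. In particular, if $G_{A,B}$ is acyclic, then $G^{[2]}_{A,B}$ is steady.
   Context: DSR graphs: for $P\in\mathbb{R}^{n\times m}$, $Q\in\mathbb{R}^{m\times n}$, $G_{P,Q}$ is the signed, labelled bipartite digraph with S-vertices $S_1,\dots,S_n$ and R-vertices $R_1,\dots,R_m$, with an arc $R_j\to S_i$ of sign $\mathrm{sign}(P_{ij})$ iff $P_{ij}\ne0$ and an arc $S_i\to R_j$ of sign $\mathrm{sign}(Q_{ji})$ iff $Q_{ji}\ne0$; antiparallel arcs of equal sign are merged into a single undirected edge. An edge arising from $P_{ij}\ne0$ (R-to-S or undirected) has label $|P_{ij}|$; an edge with only S-to-R orientation has label $\infty$. Walks traverse edges consistently with orientation; a cycle is a nonempty closed walk repeating no vertex except first$=$last (a 2-cycle requires two distinct edges between the same vertices). A cycle $(e_1,\dots,e_{2r})$ is an s-cycle if all its labels are finite and $\prod_{i=1}^r l(e_{2i-1})=\prod_{i=1}^r l(e_{2i})$. A DSR graph is steady if all its cycles are s-cycles, and acyclic if it has no cycles. DSR$^{[2]}$ graph: let $\overline{\mathbf L}^A\in\mathbb{R}^{\binom n2\times mn}$ (rows $(i,j)$, $i<j$; columns $(k,l)$, $1\le k\le m$, $1\le l\le n$) have entries $A_{jk}$ if $l=i$, $-A_{ik}$ if $l=j$, $0$ otherwise, and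 $\underline{\mathbf L}^B\in\mathbb{R}^{mn\times\binom n2}$ have $(k,l),(i,j)$ entry $B_{kj}$ if $l=i$, $-B_{ki}$ if $l=j$, $0$ otherwise. Then $G^{[2]}_{A,B}:=G_{\overline{\mathbf L}^A,\underline{\mathbf L}^B}$. *)

From HB Require Import structures.
From mathcomp Require Import all_boot all_order all_algebra.
Set Implicit Arguments. Unset Strict Implicit. Unset Printing Implicit Defensive.
Import Order.TTheory GRing.Theory Num.Theory.
Local Open Scope ring_scope.

(* DSR graphs G_{P,Q}, over arbitrary finite index types:
   S-vertices indexed by IS, R-vertices indexed by IR,
   P : IS -> IR -> R  (the matrix P, entry P_{ij}, i S-index, j R-index),
   Q : IR -> IS -> R  (the matrix Q, entry Q_{ji}). *)
Section DSR.
Variables (R : realFieldType) (IS IR : finType).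
Variables (P : IS -> IR -> R) (Q : IR -> IS -> R).

(* vertices: inl i = S_i, inr j = R_j *)
Definition dsr_vertex := (IS + IR)%type.

(* edges between S_i and R_j:
   (i, j, true)  = the edge arising from P_{ij} <> 0 (R_j -> S_i, and
                   undirected i.e. also S_i -> R_j when it was merged with
                   the antiparallel arc S_i -> R_j of equal sign);
   (i, j, false) = an arc S_i -> R_j arising from Q_{ji} <> 0 that was
                   NOT merged (i.e. with only S-to-R orientation). *)
Definition dsr_edge := (IS * IR * bool)%type.

Definition merged (i : IS) (j : IR) : bool :=
  (P i j != 0) && (Q j i != 0) && (Num.sg (P i j) == Num.sg (Q j i)).

Definition dsr_trav (e : dsr_edge) (u v : dsr_vertex) : bool :=
  let: (i, j, b) := e in
  if b then
    ((u == inr j) && (v == inl i) && (P i j != 0))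
    || ((u == inl i) && (v == inr j) && merged i j)
  else
    (u == inl i) && (v == inr j) && (Q j i != 0) && ~~ merged i j.

(* labels: finite labels |P_{ij}| for P-edges, infinity (None) otherwise *)
Definition dsr_label (e : dsr_edge) : option R :=
  let: (i, j, b) := e in if b then Some `|P i j| else None.

Definition lab_val (e : dsr_edge) : R :=
  if dsr_label e is Some x then x else 0.

(* A cycle of length L: edges es 0, ..., es (L-1) (= e_1,...,e_L) through
   vertices vs 0, ..., vs L with vs L = vs 0, each edge traversed
   consistently with its orientation, no repeated vertex, and (for the
   2-cycle case) distinct edges. *)
Definition is_cycle (L : nat) (vs : nat -> dsr_vertex) (es : nat -> dsr_edge)
  : Prop :=
  [/\ (0 < L)%N,
      vs L = vs 0%N,
      (forall t, (t < L)%N -> dsr_trav (es t) (vs t) (vs t.+1)),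
      (forall t1 t2, (t1 < L)%N -> (t2 < L)%N -> vs t1 = vs t2 -> t1 = t2) &
      (forall t1 t2, (t1 < L)%N -> (t2 < L)%N -> es t1 = es t2 -> t1 = t2)].

(* s-cycle: all labels finite and prod of labels of e_1,e_3,... equals
   prod of labels of e_2,e_4,... (e_{t+1} = es t). *)
Definition is_s_cycle (L : nat) (es : nat -> dsr_edge) : Prop :=
  (forall t, (t < L)%N -> dsr_label (es t) != None) /\
  \prod_(t < L | ~~ odd t) lab_val (es t) = \prod_(t < L | odd t) lab_val (es t).

Definition steady : Prop :=
  forall L vs es, is_cycle L vs es -> is_s_cycle L es.

Definition acyclic : Prop :=
  forall L vs es, ~ is_cycle L vs es.

End DSR.

(* Index set of the rows of the second additive compound: pairs (i,j), i<j *)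
Definition pairs (n : nat) := {p : 'I_n * 'I_n | (p.1 < p.2)%N}.

Definition Lbar (R : ringType) (n m : nat) (A : 'M[R]_(n, m))
  (p : pairs n) (c : 'I_m * 'I_n) : R :=
  let: (i, j) := val p in let: (k, l) := c in
  if l == i then A j k else if l == j then - A i k else 0.

Definition Lund (R : ringType) (n m : nat) (B : 'M[R]_(m, n))
  (c : 'I_m * 'I_n) (p : pairs n) : R :=
  let: (i, j) := val p in let: (k, l) := c in
  if l == i then B k j else if l == j then - B k i else 0.

From mathcomp Require Import all_boot all_order all_algebra.
From mathcomp Require Import zify.
Import Order.TTheory GRing.Theory Num.Theory.
Set Implicit Arguments. Unset Strict Implicit. Unset Printing Implicit Defensive.
Local Open Scope ring_scope.

(* In a steady DSR graph every closed walk satisfies the s-cycle condition: at a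
   repeated vertex it splits into two shorter closed walks, and a closed walk
   without repeated vertices is either a cycle or runs back and forth along a
   single undirected edge.
   A vertex of G^[2] stands for a pair of vertices of G, and traversing an edge
   of G^[2] moves one member of the pair along an edge of G carrying the same
   label.  Following both members around a cycle of G^[2] gives two closed walks
   of G (one, if the members end up swapped) made of exactly the projected
   steps, so the cycle is an s-cycle. *)

Section ClosedWalks.
Variables (R : realFieldType) (IS IR : finType).
Variables (P : IS -> IR -> R) (Q : IR -> IS -> R).

Local Notation V := (dsr_vertex IS IR).
Local Notation E := (dsr_edge IS IR).
Local Notation trav := (dsr_trav P Q).
Local Notation finite_label e := (dsr_label P e != None).

Definition is_svertex (x : V) : bool := if x is inl _ then true else false.

Lemma dsr_travP i j b u v : trav (i, j, b) u v ->
  [\/ [/\ u = inr j, v = inl i, b & P i j != 0],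
      [/\ u = inl i, v = inr j, b & merged P Q i j] |
      [/\ u = inl i, v = inr j, ~~ b & (Q j i != 0) && ~~ merged P Q i j]].
Proof.
rewrite /dsr_trav; case: b.
  by case/orP => /andP[/andP[/eqP -> /eqP ->] ?]; [constructor 1 | constructor 2].
by case/andP => /andP[/andP[/eqP -> /eqP ->] qne] nm; constructor 3; rewrite ?qne.
Qed.

Lemma dsr_trav_side e u v : trav e u v -> is_svertex v = ~~ is_svertex u.
Proof. by case: e => [[i j] b] /dsr_travP [] [-> ->]. Qed.

Lemma dsr_trav_ends e u v u' v' : trav e u v -> trav e u' v' ->
  (u = u' /\ v = v') \/ (u = v' /\ v = u').
Proof.
case: e => [[i j] b] /dsr_travP [] [-> -> b1 _] /dsr_travP [] [-> -> b2 _].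
all: by [left | right | move: b1 b2 => ->].
Qed.

Lemma dsr_trav_both_ways_label e u v : trav e u v -> trav e v u -> finite_label e.
Proof.
case: e => [[i j] b] /dsr_travP [] [-> -> b1 _] /dsr_travP [] [? ? b2 _] //.
all: by move: b1 b2; case: b.
Qed.

Lemma cycle_parity L (vs : nat -> V) (es : nat -> E) :
  (forall t, (t < L)%N -> trav (es t) (vs t) (vs t.+1)) ->
  forall t, (t <= L)%N -> is_svertex (vs t) = is_svertex (vs 0%N) (+) odd t.
Proof.
move=> htrav; elim=> [|t IH] tL; first by rewrite addbF.
by rewrite (dsr_trav_side (htrav t tL)) IH ?(ltnW tL) //= addbN.
Qed.

Lemma is_s_cycleE L (vs : nat -> V) (es : nat -> E) :
  (forall t, (t < L)%N -> trav (es t) (vs t) (vs t.+1)) ->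
  is_s_cycle P L es <->
  (forall t, (t < L)%N -> finite_label (es t)) /\
  \prod_(t < L | is_svertex (vs t)) lab_val P (es t) =
  \prod_(t < L | ~~ is_svertex (vs t)) lab_val P (es t).
Proof.
move=> /cycle_parity parity.
have {}parity (t : 'I_L) : odd t = is_svertex (vs 0%N) (+) is_svertex (vs t).
  by rewrite (parity t) ?(ltnW (ltn_ord t)) // addbA addbb.
rewrite /is_s_cycle !(eq_bigl _ _ (fun t => congr1 negb (parity t))).
rewrite (eq_bigl _ _ parity); case: (is_svertex (vs 0%N)) => /=.
  by under eq_bigl do rewrite negbK.
by split=> -[? ?]; split.
Qed.

Lemma acyclic_steady : acyclic P Q -> steady P Q.
Proof. by move=> acyc L vs es /acyc. Qed.

Definition dsr_step := (V * E * V)%type.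
Definition step_src (x : dsr_step) : V := x.1.1.
Definition step_edge (x : dsr_step) : E := x.1.2.
Definition step_dst (x : dsr_step) : V := x.2.

Lemma step_eta x : x = (step_src x, step_edge x, step_dst x).
Proof. by case: x => [[]]. Qed.

Fixpoint dsr_walk (a b : V) (s : seq dsr_step) : bool :=
  if s is x :: s' then
    [&& step_src x == a, trav (step_edge x) a (step_dst x) & dsr_walk (step_dst x) b s']
  else a == b.

Definition walk_vertex (b : V) (s : seq dsr_step) (t : nat) : V :=
  nth b [seq step_src x | x <- s] t.

Lemma dsr_walk_cat a b c s1 s2 :
  dsr_walk a b s1 -> dsr_walk b c s2 -> dsr_walk a c (s1 ++ s2).
Proof.
elim: s1 a => [|x s1 IH] a /=; first by move/eqP->.
by case/and3P=> -> -> /IH walk2 /walk2.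
Qed.

Lemma dsr_walk_take_drop a b s i : dsr_walk a b s -> (i <= size s)%N ->
  dsr_walk a (walk_vertex b s i) (take i s) /\ dsr_walk (walk_vertex b s i) b (drop i s).
Proof.
elim: s a i => [|x s IH] a [|i] //=.
  by case/and3P=> /eqP <- tr walk_s _; rewrite eqxx tr walk_s.
by case/and3P=> -> tr /IH walk_s /walk_s [? ?]; rewrite tr.
Qed.

Lemma dsr_walk_nth a b s x0 t : dsr_walk a b s -> (t < size s)%N ->
  [/\ step_src (nth x0 s t) = walk_vertex b s t,
      step_dst (nth x0 s t) = walk_vertex b s t.+1 &
      trav (step_edge (nth x0 s t)) (walk_vertex b s t) (walk_vertex b s t.+1)].
Proof.
elim: s a t => [|x s IH] a // [|t] /= /and3P[/eqP src tr walk_s] ts; last exact: IH walk_s _.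
rewrite /walk_vertex /= src; suff -> : nth b [seq step_src y | y <- s] 0 = step_dst x by [].
by case: s walk_s {IH ts} => [/eqP ->|y s /and3P[/eqP]].
Qed.

Lemma walk_vertex0 a b s : dsr_walk a b s -> walk_vertex b s 0 = a.
Proof. by case: s => [/eqP ->|x s /and3P[/eqP]]. Qed.

(* Along a cycle the steps leaving an S-vertex are either all the odd-numbered
   or all the even-numbered edges (cycle_parity). *)
Definition s_prod (s : seq dsr_step) : R :=
  \prod_(x <- s | is_svertex (step_src x)) lab_val P (step_edge x).
Definition r_prod (s : seq dsr_step) : R :=
  \prod_(x <- s | ~~ is_svertex (step_src x)) lab_val P (step_edge x).

Definition s_balanced (s : seq dsr_step) : Prop :=
  all (fun x => finite_label (step_edge x)) s /\ s_prod s = r_prod s.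

Lemma s_balanced_cat s1 s2 : s_balanced s1 -> s_balanced s2 -> s_balanced (s1 ++ s2).
Proof.
move=> [fin1 eq1] [fin2 eq2]; split; first by rewrite all_cat fin1.
by rewrite /s_prod /r_prod !big_cat -/(s_prod s1) -/(s_prod s2) eq1 eq2.
Qed.

Lemma s_balanced_perm s1 s2 : perm_eq s1 s2 -> s_balanced s1 -> s_balanced s2.
Proof.
move=> perm12 [fin1 eq1]; split; first by rewrite -(perm_all _ perm12).
by rewrite /s_prod /r_prod -!(perm_big _ perm12).
Qed.

Lemma s_balanced_back_and_forth e u v : trav e u v -> trav e v u ->
  s_balanced [:: (u, e, v); (v, e, u)].
Proof.
move=> uv vu; split; first by rewrite /= (dsr_trav_both_ways_label uv vu).
rewrite /s_prod /r_prod !big_cons !big_nil /step_src /= (dsr_trav_side uv).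
by case: (is_svertex u); rewrite /= mulr1.
Qed.

Lemma walk_s_balanced_nth a b s x0 : dsr_walk a b s ->
  (forall t, (t < size s)%N -> finite_label (step_edge (nth x0 s t))) ->
  \prod_(t < size s | is_svertex (walk_vertex b s t)) lab_val P (step_edge (nth x0 s t)) =
  \prod_(t < size s | ~~ is_svertex (walk_vertex b s t)) lab_val P (step_edge (nth x0 s t)) ->
  s_balanced s.
Proof.
move=> walk_s fin_s eq_s; split; first exact/(all_nthP x0).
have src_nth (t : 'I_(size s)) : step_src (nth x0 s t) = walk_vertex b s t.
  by case: (dsr_walk_nth x0 walk_s (ltn_ord t)).
rewrite /s_prod /r_prod !(big_nth x0) !big_mkord.
by under eq_bigl do rewrite src_nth; under [in RHS]eq_bigl do rewrite src_nth.
Qed.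

Lemma closed_walk_cycle a s x0 : dsr_walk a a s -> s != [::] ->
  uniq [seq step_src x | x <- s] -> uniq [seq step_edge x | x <- s] ->
  is_cycle P Q (size s) (walk_vertex a s) (fun t => step_edge (nth x0 s t)).
Proof.
move=> walk_s s_ne uniq_v uniq_e; split.
- by rewrite lt0n size_eq0.
- by rewrite (walk_vertex0 walk_s) /walk_vertex nth_default ?size_map.
- by move=> t ts; case: (dsr_walk_nth x0 walk_s ts).
- move=> t1 t2 t1s t2s /eqP.
  by rewrite /walk_vertex nth_uniq ?size_map // => /eqP.
move=> t1 t2 t1s t2s /eqP.
rewrite -!(nth_map x0 (step_edge x0)) // nth_uniq ?size_map //.
by move/eqP.
Qed.

Lemma steady_cycle_s_balanced a s : steady P Q -> dsr_walk a a s ->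
  uniq [seq step_src x | x <- s] -> uniq [seq step_edge x | x <- s] -> s_balanced s.
Proof.
move=> steadyPQ walk_s uniq_v uniq_e.
case: s walk_s uniq_v uniq_e => [|x0 s'] walk_s uniq_v uniq_e.
  by split; rewrite /s_prod /r_prod ?big_nil.
have cyc := closed_walk_cycle x0 walk_s isT uniq_v uniq_e.
have [_ _ trav_s _ _] := cyc.
have /(is_s_cycleE trav_s) [fin_s eq_s] := steadyPQ _ _ _ cyc.
exact: walk_s_balanced_nth walk_s fin_s eq_s.
Qed.

Lemma closed_walk_repeated_edge a s : dsr_walk a a s ->
  uniq [seq step_src x | x <- s] -> ~~ uniq [seq step_edge x | x <- s] ->
  exists e u v, [/\ s = [:: (u, e, v); (v, e, u)], trav e u v & trav e v u].
Proof.
case: s => [|x0 s'] // walk_s uniq_v; set s := x0 :: s' in walk_s uniq_v *.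
pose vs := walk_vertex a s; pose es t := step_edge (nth x0 s t).
have inj_vs t1 t2 : (t1 < size s)%N -> (t2 < size s)%N -> vs t1 = vs t2 -> t1 = t2.
  by move=> t1s t2s /eqP; rewrite /vs /walk_vertex nth_uniq ?size_map // => /eqP.
have step_nth t : (t < size s)%N ->
    nth x0 s t = (vs t, es t, vs t.+1) /\ trav (es t) (vs t) (vs t.+1).
  move=> ts; have [src dst tr] := dsr_walk_nth x0 walk_s ts.
  by rewrite /vs /es -src -dst in tr *; split; first exact: step_eta.
have vsL : vs (size s) = vs 0%N.
  by rewrite /vs (walk_vertex0 walk_s) /walk_vertex nth_default ?size_map.
case/(uniqPn (step_edge x0)) => t1 [t2 [t12 t2s]]; rewrite size_map in t2s.
have t1s := ltn_trans t12 t2s.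
rewrite !(nth_map x0) // -/(es t1) -/(es t2) => e12.
have [_ tr1] := step_nth _ t1s; have [_ tr2] := step_nth _ t2s; rewrite -e12 in tr2.
have [[/inj_vs v12 _]|[v12 v21]] := dsr_trav_ends tr1 tr2.
  by move: t12; rewrite v12 ?ltnn.
have t2E : t2 = t1.+1 by apply: inj_vs; rewrite // (leq_ltn_trans t12 t2s).
have t2sE : t2.+1 = size s.
  apply/eqP; rewrite eqn_leq t2s /= leqNgt; apply/negP => t2s'.
  by move: t12; rewrite (inj_vs _ _ t1s t2s' v12) t2E ltnNge leqnSn.
have t1E : t1 = 0%N by apply: inj_vs; rewrite // v12 t2sE vsL.
subst t1 t2; rewrite t2sE vsL in tr2.
exists (es 0%N), (vs 0%N), (vs 1%N); split=> //.
have [s0 _] := step_nth _ t1s; have [s1 _] := step_nth _ t2s.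
rewrite -e12 t2sE vsL in s1.
by rewrite -s0 -s1; case: (s) t2sE => [|? [|? []]].
Qed.

Lemma closed_walk_split a s : dsr_walk a a s -> ~~ uniq [seq step_src x | x <- s] ->
  exists s1 s2 c, [/\ perm_eq s (s1 ++ s2), (size s1 < size s)%N, (size s2 < size s)%N,
                      dsr_walk a a s1 & dsr_walk c c s2].
Proof.
move=> walk_s /(uniqPn a) [i [j [ij js]]]; rewrite size_map in js => vij.
have i_s := ltn_trans ij js.
have [walk1 walk_rest] := dsr_walk_take_drop walk_s (ltnW i_s).
have ji : (j - i <= size (drop i s))%N by rewrite size_drop leq_sub2r // ltnW.
have [] := dsr_walk_take_drop walk_rest ji.
have -> : walk_vertex a (drop i s) (j - i) = walk_vertex a s i.
  by rewrite /walk_vertex vij map_drop nth_drop subnKC // ltnW.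
rewrite drop_drop subnK ?(ltnW ij) // => walk2 walk3.
exists (take i s ++ drop j s), (take (j - i) (drop i s)), (walk_vertex a s i); split.
- rewrite -{1}(cat_take_drop i s) -{1}(cat_take_drop (j - i) (drop i s)).
  by rewrite drop_drop subnK ?(ltnW ij) // -catA perm_cat2l perm_catC.
- rewrite size_cat size_take size_drop i_s; move: ij js; move: (size s) => k; lia.
- rewrite size_takel //; move: ij js; move: (size s) => k; lia.
- exact: dsr_walk_cat walk1 walk3.
- exact: walk2.
Qed.

Lemma steady_closed_walk_s_balanced a s : steady P Q -> dsr_walk a a s -> s_balanced s.
Proof.
move=> steadyPQ; elim: {s}(size s) {-2}s (leqnn (size s)) a => [|N IH] s sN a walk_s.
  by move: sN; rewrite leqn0 size_eq0 => /eqP ->; split; rewrite /s_prod /r_prod ?big_nil.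
have [uniq_v|/(closed_walk_split walk_s) [s1 [s2 [c [perm_s s1s s2s walk1 walk2]]]]] :=
  boolP (uniq [seq step_src x | x <- s]).
  have [uniq_e|] := boolP (uniq [seq step_edge x | x <- s]).
    exact: steady_cycle_s_balanced walk_s uniq_v uniq_e.
  case/(closed_walk_repeated_edge walk_s uniq_v) => e [u [v [-> ]]].
  exact: s_balanced_back_and_forth.
rewrite perm_sym in perm_s; apply: s_balanced_perm perm_s _.
by apply: s_balanced_cat; [apply: IH walk1 | apply: IH walk2];
  rewrite -ltnS (leq_trans _ sN).
Qed.

End ClosedWalks.

Section TokenPairs.
Variable T : eqType.

Definition same_pair (p q : T * T) : Prop := p = q \/ p = (q.2, q.1).

Definition move_token (s : T * T) (u v : T) : T * T :=
  if s.1 == u then (v, s.2) else (s.1, v).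

Lemma same_pair_sym p q : same_pair p q -> same_pair q p.
Proof. by case: p q => [? ?] [? ?] [] [-> ->]; [left | right]. Qed.

Lemma same_pair_trans p q r : same_pair p q -> same_pair q r -> same_pair p r.
Proof.
by case: p q r => [? ?] [? ?] [? ?] [] [-> ->] [] [-> ->]; [left | right | right | left].
Qed.

Lemma move_token_same_pair s u v c :
  same_pair s (u, c) -> same_pair (move_token s u v) (v, c).
Proof.
rewrite /move_token; case=> -> /=; first by rewrite eqxx; left.
by case: eqP => [->|_]; [left | right].
Qed.

Lemma move_token_snd s u c : same_pair s (u, c) -> s.1 != u -> s.2 = u.
Proof. by case=> -> //=; rewrite eqxx. Qed.

End TokenPairs.

Section SecondAdditiveCompound.
Variables (R : realFieldType) (n m : nat) (A : 'M[R]_(n, m)) (B : 'M[R]_(m, n)).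

Local Notation PA := (fun (i : 'I_n) (j : 'I_m) => A i j).
Local Notation QB := (fun (j : 'I_m) (i : 'I_n) => B j i).
Local Notation V := (dsr_vertex 'I_n 'I_m).
Local Notation V2 := (dsr_vertex (pairs n) ('I_m * 'I_n)%type).
Local Notation E2 := (dsr_edge (pairs n) ('I_m * 'I_n)%type).
Local Notation trav := (dsr_trav PA QB).
Local Notation trav2 := (dsr_trav (Lbar A) (Lund B)).

Definition in_pair (p : pairs n) (l : 'I_n) : bool := (l == (val p).1) || (l == (val p).2).

Definition pair_partner (p : pairs n) (l : 'I_n) : 'I_n :=
  if l == (val p).1 then (val p).2 else (val p).1.

Lemma LbarE p k l : Lbar A p (k, l) =
  if l == (val p).1 then A (val p).2 k else if l == (val p).2 then - A (val p).1 k else 0.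
Proof. by case: p => [[]]. Qed.

Lemma LundE p k l : Lund B (k, l) p =
  if l == (val p).1 then B k (val p).2 else if l == (val p).2 then - B k (val p).1 else 0.
Proof. by case: p => [[]]. Qed.

Lemma Lbar_Lund_notin p k l :
  ~~ in_pair p l -> Lbar A p (k, l) = 0 /\ Lund B (k, l) p = 0.
Proof. by rewrite /in_pair negb_or LbarE LundE => /andP[/negbTE -> /negbTE ->]. Qed.

Lemma Lbar_Lund_partner p k l : in_pair p l ->
  [/\ (Lbar A p (k, l) != 0) = (A (pair_partner p l) k != 0),
      (Lund B (k, l) p != 0) = (B k (pair_partner p l) != 0),
      merged (Lbar A) (Lund B) p (k, l) = merged PA QB (pair_partner p l) k &
      `|Lbar A p (k, l)| = `|A (pair_partner p l) k|].
Proof.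
rewrite /merged LbarE LundE /pair_partner /in_pair; case: ifP => //= _ ->.
by rewrite !oppr_eq0 !sgrN eqr_opp normrN.
Qed.

Definition edge_proj (e : E2) : dsr_edge 'I_n 'I_m :=
  let: (p, (k, l), b) := e in (pair_partner p l, k, b).

Definition vertex_proj (e : E2) (X : V2) : V :=
  if X is inl _ then inl (edge_proj e).1.1 else inr (edge_proj e).1.2.

(* S_(i,j) stands for {S_i, S_j} and R_(k,l) for {S_l, R_k}. *)
Definition vertex_pair (X : V2) : V * V :=
  match X with inl p => (inl (val p).1, inl (val p).2) | inr (k, l) => (inl l, inr k) end.

Lemma compound_trav_in_pair p k l b X Y : trav2 (p, (k, l), b) X Y -> in_pair p l.
Proof.
case: (boolP (in_pair p l)) => // /(Lbar_Lund_notin k) [Lbar0 Lund0].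
by case/dsr_travP => [] [_ _ _]; rewrite /merged ?Lbar0 ?Lund0 !eqxx.
Qed.

Lemma compound_trav_proj e X Y :
  trav2 e X Y -> trav (edge_proj e) (vertex_proj e X) (vertex_proj e Y).
Proof.
case: e => [[p [k l]] b] tr2.
have [nzA nzB mAB _] := Lbar_Lund_partner k (compound_trav_in_pair tr2).
case/dsr_travP: tr2 => [] [-> -> /= hb]; rewrite /dsr_trav ?hb ?(negbTE hb) !eqxx /=.
- by rewrite nzA orbF.
- by rewrite mAB.
- by rewrite nzB mAB.
Qed.

Lemma compound_label_proj e X Y :
  trav2 e X Y -> dsr_label (Lbar A) e = dsr_label PA (edge_proj e).
Proof.
case: e => [[p [k l]] b] /compound_trav_in_pair /(Lbar_Lund_partner k) [_ _ _ absE].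
by case: b => //=; rewrite absE.
Qed.

Lemma compound_trav_vertex_pair e X Y : trav2 e X Y -> exists c,
  same_pair (vertex_pair X) (vertex_proj e X, c) /\
  same_pair (vertex_pair Y) (vertex_proj e Y, c).
Proof.
case: e => [[p [k l]] b] tr2.
have pairE : same_pair (vertex_pair (inl p)) (inl (pair_partner p l), inl l).
  move: (compound_trav_in_pair tr2); rewrite /in_pair /pair_partner /=.
  by case: ifP => [/eqP -> _|_ /= /eqP ->]; [right | left].
by exists (inl l); case/dsr_travP: tr2 => [] [-> -> _ _]; split; by [right | exact: pairE].
Qed.

Section CompoundCycle.
Variables (L : nat) (vs : nat -> V2) (es : nat -> E2).
Hypothesis trav_vs : forall t, (t < L)%N -> trav2 (es t) (vs t) (vs t.+1).

Definition proj_step t : dsr_step 'I_n 'I_m :=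
  (vertex_proj (es t) (vs t), edge_proj (es t), vertex_proj (es t) (vs t.+1)).

Fixpoint tokens t : V * V :=
  if t is t'.+1 then
    move_token (tokens t') (step_src (proj_step t')) (step_dst (proj_step t'))
  else vertex_pair (vs 0%N).

Definition first_token_moves t : bool := (tokens t).1 == step_src (proj_step t).

Definition first_token_walk T :=
  [seq proj_step t | t <- iota 0 T & first_token_moves t].
Definition second_token_walk T :=
  [seq proj_step t | t <- iota 0 T & ~~ first_token_moves t].

Lemma tokens_vertex_pair T : (T <= L)%N -> same_pair (tokens T) (vertex_pair (vs T)).
Proof.
elim: T => [|T IH] TL; first by left.
have [c [pairX pairY]] := compound_trav_vertex_pair (trav_vs TL).
apply/same_pair_sym/(same_pair_trans pairY)/same_pair_sym/move_token_same_pair.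
exact: same_pair_trans (IH (ltnW TL)) pairX.
Qed.

Lemma token_walks T : (T <= L)%N ->
  dsr_walk PA QB (tokens 0).1 (tokens T).1 (first_token_walk T) /\
  dsr_walk PA QB (tokens 0).2 (tokens T).2 (second_token_walk T).
Proof.
elim: T => [|T IH] TL; first by rewrite /= !eqxx.
have [walk1 walk2] := IH (ltnW TL).
have tr := compound_trav_proj (trav_vs TL); rewrite -/(proj_step T) in tr.
have step_walk a : a = step_src (proj_step T) ->
    dsr_walk PA QB a (step_dst (proj_step T)) [:: proj_step T].
  by move=> ->; rewrite /= !eqxx tr.
have iotaS : iota 0 T.+1 = iota 0 T ++ [:: T] by rewrite -addn1 iotaD.
rewrite /first_token_walk /second_token_walk iotaS !filter_cat !map_cat /=.
rewrite -/(first_token_walk T) -/(second_token_walk T) /move_token -/(first_token_moves T).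
case: ifP => moves /=; rewrite ?cats0; split=> //.
  by apply: dsr_walk_cat walk1 (step_walk _ _); apply/eqP.
have [c [pairX _]] := compound_trav_vertex_pair (trav_vs TL).
apply: dsr_walk_cat walk2 (step_walk _ _).
apply: (move_token_snd (c := c)); last exact: negbT moves.
exact: same_pair_trans (tokens_vertex_pair (ltnW TL)) pairX.
Qed.

Lemma proj_steps_s_balanced : steady PA QB -> vs L = vs 0%N ->
  s_balanced PA [seq proj_step t | t <- iota 0 L].
Proof.
move=> steadyPQ vsL; have [walk1 walk2] := token_walks (leqnn L).
have perm12 : perm_eq (first_token_walk L ++ second_token_walk L)
                      [seq proj_step t | t <- iota 0 L].
  by rewrite -map_cat perm_map // perm_filterC.
apply: s_balanced_perm perm12 _.
have /= := tokens_vertex_pair (leqnn L); rewrite vsL => -[tokL|tokL].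
all: rewrite tokL /= in walk1 walk2.
  exact: s_balanced_cat (steady_closed_walk_s_balanced steadyPQ walk1)
                        (steady_closed_walk_s_balanced steadyPQ walk2).
exact: steady_closed_walk_s_balanced steadyPQ (dsr_walk_cat walk1 walk2).
Qed.

End CompoundCycle.

Lemma steady_second_compound : steady PA QB -> steady (Lbar A) (Lund B).
Proof.
move=> steadyPQ L vs es [_ vsL trav_vs _ _]; apply/(is_s_cycleE trav_vs).
have [fin_proj eq_proj] := proj_steps_s_balanced trav_vs steadyPQ vsL.
have labelE t : (t < L)%N ->
    dsr_label (Lbar A) (es t) = dsr_label PA (step_edge (proj_step vs es t)).
  by move=> tL; rewrite (compound_label_proj (trav_vs t tL)).
split=> [t tL|].
  by rewrite labelE //; apply: (allP fin_proj); rewrite map_f ?mem_iota.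
move: eq_proj; rewrite /s_prod /r_prod !big_map.
have -> : iota 0 L = index_iota 0 L by rewrite /index_iota subn0.
have sideE (t : 'I_L) : is_svertex (step_src (proj_step vs es t)) = is_svertex (vs t).
  by rewrite /step_src /=; case: (vs t).
have labE (t : 'I_L) : lab_val PA (step_edge (proj_step vs es t)) = lab_val (Lbar A) (es t).
  by rewrite /lab_val labelE.
have negE (t : 'I_L) : ~~ is_svertex (step_src (proj_step vs es t)) = ~~ is_svertex (vs t).
  by rewrite sideE.
by rewrite !big_mkord (eq_big _ _ sideE (fun t _ => labE t))
                      (eq_big _ _ negE (fun t _ => labE t)).
Qed.

End SecondAdditiveCompound.

Theorem corollary5p1 (R : realFieldType) (n m : nat)
  (A : 'M[R]_(n, m)) (B : 'M[R]_(m, n)) :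
  (2 <= n)%N ->
  (steady (fun (i : 'I_n) (j : 'I_m) => A i j) (fun (j : 'I_m) (i : 'I_n) => B j i) ->
     steady (Lbar A) (Lund B)) /\
  (acyclic (fun (i : 'I_n) (j : 'I_m) => A i j) (fun (j : 'I_m) (i : 'I_n) => B j i) ->
     steady (Lbar A) (Lund B)).
Proof.
move=> _; split=> [|/acyclic_steady]; exact: steady_second_compound.
Qed.
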